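(* Let $D=(E,\mathcal{F})$ be a normal delta-matroid and $A\subseteq E$, with $A^{c}=E\setminus A$. Then $w(D*A)=w(D|_{A})+w(D|_{A^{c}})$.
   Context: A delta-matroid is a set system $(E,\mathcal{F})$, $\mathcal{F}\ne\emptyset$ a family of subsets of finite $E$, satisfying: for all $X,Y\in\mathcal{F}$ and $u\in X\Delta Y$ there is $v\in X\Delta Y$ with $X\Delta\{u,v\}\in\mathcal{F}$. It is normal if $\emptyset\in\mathcal{F}$. Twist: $D*A=(E,\{A\Delta X:X\in\mathcal{F}\})$. Width $w(D)$ = maximum minus minimum cardinality of feasible sets (so a delta-matroid on the empty ground set has width $0$). An element is a coloop if it lies in every feasible set. Deletion: $D\setminus e=(E\setminus e,\mathcal{F}')$ where $\mathcal{F}'=\{F\in\mathcal{F}: e\notin F\}$ if $e$ is not a coloop and $\mathcal{F}'=\{F\setminus e: F\in\mathcal{F}\}$ if $e$ is a coloop; deleting a set of elements one at a time is order-independent. The restriction $D|_{A}$ is the result of deleting all elements of $E\setminus A$. *)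

From mathcomp Require Import all_boot.
Set Implicit Arguments. Unset Strict Implicit. Unset Printing Implicit Defensive.

Section SetSystems.
Variable T : finType.

Definition setsys := ({set T} * {set {set T}})%type.

Definition symdiff (X Y : {set T}) : {set T} := (X :\: Y) :|: (Y :\: X).

Definition is_setsys (D : setsys) : Prop :=
  forall X, X \in D.2 -> X \subset D.1.

Definition delta_matroid (D : setsys) : Prop :=
  [/\ is_setsys D, D.2 != set0 &
      forall X Y u, X \in D.2 -> Y \in D.2 -> u \in symdiff X Y ->
        exists2 v, v \in symdiff X Y & symdiff X [set u; v] \in D.2].

Definition normal (D : setsys) : Prop := set0 \in D.2.

Definition twist (D : setsys) (A : {set T}) : setsys :=
  (D.1, [set symdiff A X | X in D.2]).

(* maximum and minimum cardinality of feasible sets (for nonempty families);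
   the identity #|T| of minn is never below the cardinality of a subset. *)
Definition maxcard (F : {set {set T}}) : nat := \max_(X in F) #|X|.
Definition mincard (F : {set {set T}}) : nat := \big[minn/#|T|]_(X in F) #|X|.
Definition width (D : setsys) : nat := maxcard D.2 - mincard D.2.

Definition coloop (D : setsys) (e : T) : bool := [forall X in D.2, e \in X].

Definition delete (D : setsys) (e : T) : setsys :=
  (D.1 :\ e,
   if coloop D e then [set X :\ e | X in D.2]
   else [set X in D.2 | e \notin X]).

Definition delete_seq (D : setsys) (s : seq T) : setsys :=
  foldl delete D s.

Definition restrict (D : setsys) (A : {set T}) : setsys :=
  delete_seq D (enum (D.1 :\: A)).

End SetSystems.

From mathcomp Require Import all_boot.
From mathcomp Require Import zify.

Set Implicit Arguments. Unset Strict Implicit. Unset Printing Implicit Defensive.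

(* Write F_B for the feasible sets contained in B.  Since the empty set is
   feasible, D has no coloops, so the restriction D|_B has family exactly F_B
   and its width is the largest cardinality a_B of a member of F_B.

   The heart of the proof is a shrinking lemma: using the exchange axiom
   against the empty set, any feasible X can be shrunk, one or two elements of
   X \ B at a time, to a feasible X' contained in B, losing at most one
   element of X :&: B per element of X \ B removed; hence
        #|X :&: B| <= a_B + #|X :\: B|.
   Applied to B = A and to B = E :\: A, together with
        #|A (+) X| = #|A| - #|X :&: A| + #|X :\: A|,
   this gives  #|A| - a_A <= #|A (+) X| <= #|A| + a_(E\A)  for every feasible
   X, with equality attained by maximal members of F_A and F_(E\A).  The width
   of D * A is therefore a_A + a_(E\A), the sum of the two restricted widths. *)

Section TwistWidth.
Variable T : finType.
Implicit Types (D : setsys T) (E X Y A B : {set T}) (F G : {set {set T}}).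

Definition feasible_in F B : {set {set T}} := [set X in F | X \subset B].

Lemma set0_feasible_in F B : set0 \in F -> set0 \in feasible_in F B.
Proof. by move=> F0; rewrite inE F0 sub0set. Qed.

(* In a normal set system no element is a coloop, so deletion just discards
   the feasible sets containing the deleted element. *)
Lemma delete_normal D e : set0 \in D.2 ->
  delete D e = (D.1 :\ e, [set X in D.2 | e \notin X]).
Proof.
by move=> D0; rewrite /delete; case: ifP => // /forallP /(_ set0); rewrite D0 inE.
Qed.

Lemma delete_seq_normal D s : set0 \in D.2 ->
  (delete_seq D s).2 = [set X in D.2 | all (fun e => e \notin X) s].
Proof.
elim: s D => [|e s IH] D D0 /=; first by apply/setP=> X; rewrite inE andbT.
rewrite /delete_seq /= -/(delete_seq _ _) IH; last by rewrite delete_normal //= !inE D0.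
by rewrite delete_normal //=; apply/setP=> X; rewrite !inE andbA.
Qed.

Lemma restrict_normal E F B : is_setsys (E, F) -> set0 \in F ->
  (restrict (E, F) B).2 = feasible_in F B.
Proof.
move=> sysF F0; rewrite /restrict delete_seq_normal //=.
apply/setP=> X; rewrite !inE; case XF: (X \in F) => //=.
have XE := sysF X XF.
apply/allP/subsetP => [avoid x xX | XB x].
  apply: contraT => xNB; have := avoid x.
  by rewrite mem_enum !inE xNB (subsetP XE x xX) xX => /(_ isT).
by rewrite mem_enum !inE => /andP[xNB _]; apply: contra xNB => /XB.
Qed.

Lemma mincard_le G X : X \in G -> mincard G <= #|X|.
Proof.
move=> XG; rewrite /mincard; have := mem_index_enum X.
elim: (index_enum _) => // Y r IH; rewrite inE big_cons => /orP[/eqP<- | Xr].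
  by rewrite XG geq_minl.
by case: ifP => _; rewrite ?geq_min IH ?orbT.
Qed.

Lemma mincard0 G : set0 \in G -> mincard G = 0.
Proof. by move=> G0; apply/eqP; rewrite -leqn0 -(cards0 T) mincard_le. Qed.

Lemma width_restrict E F B : is_setsys (E, F) -> set0 \in F ->
  width (restrict (E, F) B) = maxcard (feasible_in F B).
Proof.
by move=> sysF F0; rewrite /width restrict_normal // mincard0 ?subn0 ?set0_feasible_in.
Qed.

Lemma maxcard_eq G m : (exists2 X, X \in G & #|X| = m) ->
  (forall X, X \in G -> #|X| <= m) -> maxcard G = m.
Proof.
move=> [X XG <-] ub; apply/eqP; rewrite eqn_leq (leq_bigmax_cond X) // andbT.
exact/bigmax_leqP.
Qed.

Lemma mincard_eq G m : (exists2 X, X \in G & #|X| = m) ->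
  (forall X, X \in G -> m <= #|X|) -> mincard G = m.
Proof.
move=> [X XG <-] lb; apply/eqP; rewrite eqn_leq mincard_le //=.
rewrite /mincard; elim/big_ind: _ => [|a b ha hb|Y YG];
  [exact: max_card | by rewrite leq_min ha hb | exact: lb].
Qed.

Lemma maxcard_ub G X : X \in G -> #|X| <= maxcard G.
Proof. exact: leq_bigmax_cond. Qed.

Lemma maxcard_attained G : set0 \in G -> exists2 X, X \in G & #|X| = maxcard G.
Proof.
move=> G0; have [|X XG maxX] := @eq_bigmax_cond _ (mem G) (fun X => #|X|).
  by apply/card_gt0P; exists set0.
by exists X; rewrite // /maxcard maxX.
Qed.

Lemma card_symdiff A X : #|symdiff A X| = #|A :\: X| + #|X :\: A|.
Proof.
rewrite -(cardsID A (symdiff A X)).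
have -> : symdiff A X :&: A = A :\: X.
  by apply/setP=> x; rewrite !inE; case: (x \in A); case: (x \in X).
have -> : symdiff A X :\: A = X :\: A.
  by apply/setP=> x; rewrite !inE; case: (x \in A); case: (x \in X).
by [].
Qed.

Lemma card_symdiff_sub A X : X \subset A -> #|symdiff A X| = #|A| - #|X|.
Proof.
move=> XA; apply/eqP; rewrite card_symdiff cardsD (setIidPr XA).
by move: XA; rewrite -setD_eq0 => /eqP ->; rewrite cards0 addn0.
Qed.

Lemma card_symdiff_disjoint A X : [disjoint X & A] ->
  #|symdiff A X| = #|A| + #|X|.
Proof.
by move=> XA; rewrite card_symdiff (setDidPl XA) (setDidPl _) // disjoint_sym.
Qed.

Lemma symdiff_sub X Y : Y \subset X -> symdiff X Y = X :\: Y.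
Proof. by rewrite /symdiff -setD_eq0 => /eqP ->; rewrite setU0. Qed.

Lemma cardsI_split X Y B : Y \subset X ->
  #|X :&: B| = #|(X :\: Y) :&: B| + #|Y :&: B|.
Proof.
by move=> YX; rewrite addnC -(cardsID Y (X :&: B)) setIAC (setIidPr YX) setIDAC.
Qed.

Section NormalDeltaMatroid.
Variables (E : {set T}) (F : {set {set T}}).
Hypotheses (dmF : delta_matroid (E, F)) (F0 : set0 \in F).

(* Exchanging against the empty feasible set removes from a feasible X a
   prescribed element u together with at most one further element v. *)
Lemma feasible_remove X u : X \in F -> u \in X ->
  exists2 v, v \in X & X :\: [set u; v] \in F.
Proof.
move=> XF uX; case: dmF => _ _ exchange.
have XsymX : symdiff X set0 = X by rewrite /symdiff setD0 set0D setU0.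
have [|v] := exchange X set0 u XF F0; first by rewrite XsymX.
rewrite XsymX => vX; exists v => //.
by rewrite -symdiff_sub // subUset !sub1set uX.
Qed.

Lemma feasible_shrink B X : X \in F ->
  exists2 X', X' \in feasible_in F B & #|X :&: B| <= #|X'| + #|X :\: B|.
Proof.
have [n] := ubnP #|X :\: B|; elim: n X => // n IH X ltXn XF.
have [XB0 | [u uXB]] := set_0Vmem (X :\: B).
  exists X; first by rewrite inE XF -setD_eq0 XB0 /=.
  exact: leq_trans (subset_leq_card (subsetIl X B)) (leq_addr _ _).
move: uXB; rewrite inE => /andP[uNB uX].
have [v vX X2F] := feasible_remove XF uX.
set S := [set u; v] in X2F *.
have SX : S \subset X by rewrite subUset !sub1set uX.
have splitI := cardsI_split B SX.
have splitD := cardsI_split (~: B) SX; rewrite -!setDE in splitD.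
have SIB : #|S :&: B| <= 1.
  rewrite -(cards1 v) subset_leq_card //; apply/subsetP=> x.
  by rewrite !inE => /andP[/orP[/eqP-> | ->] //]; rewrite (negbTE uNB).
have SDB : 0 < #|S :\: B| by apply/card_gt0P; exists u; rewrite !inE eqxx uNB.
have [|X' X'FB le'] := IH (X :\: S) _ X2F; first by lia.
by exists X'; lia.
Qed.

Lemma feasible_in_bound B X : X \in F ->
  #|X :&: B| <= maxcard (feasible_in F B) + #|X :\: B|.
Proof.
move=> XF; have [X' X'FB le'] := feasible_shrink B XF.
by apply: leq_trans le' _; rewrite leq_add2r maxcard_ub.
Qed.

Variable A : {set T}.

Lemma twist_card_lb X : X \in F ->
  #|A| - maxcard (feasible_in F A) <= #|symdiff A X|.
Proof.
move=> XF; have := feasible_in_bound A XF.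
have := cardsID X A; rewrite card_symdiff cardsD setIC; lia.
Qed.

Lemma twist_card_ub X : X \in F ->
  #|symdiff A X| <= #|A| + maxcard (feasible_in F (E :\: A)).
Proof.
move=> XF; have XE : X \subset E by case: dmF => sysF _ _; exact: sysF.
have := feasible_in_bound (E :\: A) XF.
rewrite setIDA (setIidPl XE) setDDr.
move: XE; rewrite -setD_eq0 => /eqP ->; rewrite set0U.
have := cardsID X A; rewrite card_symdiff cardsD setIC; lia.
Qed.

(* Both bounds are attained, so the width of D * A is a_A + a_(E\A). *)
Lemma width_twist :
  width (twist (E, F) A) =
    maxcard (feasible_in F A) + maxcard (feasible_in F (E :\: A)).
Proof.
have [XA /setIdP[XAF XAsub] cardXA] := maxcard_attained (set0_feasible_in A F0).
have [XB /setIdP[XBF XBsub] cardXB] :=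
  maxcard_attained (set0_feasible_in (E :\: A) F0).
have XAle : #|XA| <= #|A| by exact: subset_leq_card.
rewrite /width /= (@mincard_eq _ (#|A| - #|XA|)); last first.
- by move=> _ /imsetP[X XF ->]; rewrite cardXA twist_card_lb.
- by exists (symdiff A XA); [exact: imset_f | exact: card_symdiff_sub].
rewrite (@maxcard_eq _ (#|A| + #|XB|)); last first.
- by move=> _ /imsetP[X XF ->]; rewrite cardXB twist_card_ub.
- exists (symdiff A XB); first exact: imset_f.
  by apply: card_symdiff_disjoint; move: XBsub; rewrite subsetD => /andP[].
by rewrite -cardXA -cardXB; lia.
Qed.

End NormalDeltaMatroid.
End TwistWidth.

Theorem mainTheorem7 (T : finType) (E : {set T}) (F : {set {set T}})
    (A : {set T}) :
  delta_matroid (E, F) -> normal (E, F) -> A \subset E ->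
  width (twist (E, F) A) =
    width (restrict (E, F) A) + width (restrict (E, F) (E :\: A)).
Proof.
move=> dmF F0 _; have sysF : is_setsys (E, F) by case: dmF.
by rewrite !width_restrict // width_twist.
Qed.
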